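(* Let $\{\phi_j\}_{j\in\mathbb Z}$ be the Fourier basis $\phi_j(t)=e^{\mathrm ij\pi t}$, $T=\{t_n\}_{n=1}^N\subseteq[-1,1]$ scattered points with density $h$, and suppose $hM\le1$. Then $$F(h,M,R)\lesssim\sqrt M\sup_{i\notin\{-R,\dots,R-1\}}\{1/w_i\}.$$ Moreover, if the weights satisfy $w_i\gtrsim|i|$ and $R\ge M$, then $$F(h,M,R)\lesssim h\sqrt M\sup_{i\notin\{-R,\dots,R-1\}}\{|i|/w_i\}.$$
   Context: Fourier setting: $D=(-1,1)$, $\nu=1/2$. $h=\sup_{t\in(-1,1)}\min_n|t-t_n|$; Voronoi cells $V_n=\{t\in(-1,1):|t-t_n|\le|t-t_m|\ \forall m\ne n\}$; $\tau_n=\int_{V_n}\nu$. $U_{n,j}=\sqrt{\tau_n}\phi_j(t_n)$, $j\in\mathbb Z$. Positive weights $w_i\ge1$, $i\in\mathbb Z$, $W=\mathrm{diag}(w_i)_{i\in\mathbb Z}$. For $L\in\mathbb N$, $P_L$ is the coordinate projection onto $\{-L,\dots,L-1\}$ and $P_L^\perp=I-P_L$. $F(h,M,R)=\|P_R^\perp W^{-1}U^*UP_M\|_\infty$ ($\ell^\infty$ operator norm). $a\lesssim b$ means $a\le Cb$ with $C$ independent of $h$, $M$, $R$, $N$, $T$. *)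

From Stdlib Require Import Reals ZArith ClassicalEpsilon.
From Coquelicot Require Import Coquelicot.
Open Scope R_scope.

(* Points: t 0, ..., t (N-1)  (the paper's t_1..t_N). *)

Definition phi (j : Z) (s : R) : C :=
  (cos (IZR j * PI * s), sin (IZR j * PI * s)).

Fixpoint mindist (t : nat -> R) (k : nat) (s : R) : R :=
  match k with
  | O => Rabs (s - t O)
  | S k' => Rmin (mindist t k' s) (Rabs (s - t (S k')))
  end.

(* h = sup_{s in (-1,1)} min_n |s - t_n| (finite since points lie in [-1,1]). *)
Definition hdens (N : nat) (t : nat -> R) : R :=
  real (Lub_Rbar (fun d => exists s, -1 < s < 1 /\ d = mindist t (N - 1) s)).

Definition voronoi (N : nat) (t : nat -> R) (n : nat) (s : R) : Prop :=
  -1 < s < 1 /\ forall m, (m < N)%nat -> m <> n -> Rabs (s - t n) <= Rabs (s - t m).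

(* tau_n = int_{V_n} nu, nu = 1/2 Lebesgue on (-1,1) *)
Definition tau (N : nat) (t : nat -> R) (n : nat) : R :=
  RInt (fun s => if excluded_middle_informative (voronoi N t n s) then / 2 else 0)
       (-1) 1.

Definition Umat (N : nat) (t : nat -> R) (n : nat) (j : Z) : C :=
  Cmult (RtoC (sqrt (tau N t n))) (phi j (t n)).

Fixpoint csum (k : nat) (f : nat -> C) : C :=
  match k with
  | O => RtoC 0
  | S k' => Cplus (csum k' f) (f k')
  end.

Definition inwin (L : nat) (i : Z) : Prop :=
  (- Z.of_nat L <= i <= Z.of_nat L - 1)%Z.

Definition PL (L : nat) (x : Z -> C) (i : Z) : C :=
  if excluded_middle_informative (inwin L i) then x i else RtoC 0.

Definition PLperp (L : nat) (x : Z -> C) (i : Z) : C :=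
  Cminus (x i) (PL L x i).

(* U applied to a sequence supported in {-M,...,M-1}: the matrix product
   (U y)_n = sum_j U_{n,j} y_j, where only j in {-M..M-1} can contribute. *)
Definition U_on (N : nat) (t : nat -> R) (M : nat) (y : Z -> C) (n : nat) : C :=
  csum (2 * M) (fun k => let j := (Z.of_nat k - Z.of_nat M)%Z in
                         Cmult (Umat N t n j) (y j)).

Definition Ustar (N : nat) (t : nat -> R) (y : nat -> C) (i : Z) : C :=
  csum N (fun n => Cmult (Cconj (Umat N t n i)) (y n)).

Definition Winv (w : Z -> R) (x : Z -> C) (i : Z) : C :=
  Cmult (RtoC (/ w i)) (x i).

Definition Aop (N : nat) (t : nat -> R) (w : Z -> R) (M Rr : nat)
  (x : Z -> C) : Z -> C :=
  PLperp Rr (Winv w (Ustar N t (U_on N t M (PL M x)))).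

(* F(h,M,R) = l^infty operator norm:
   sup { ||A x||_infty : ||x||_infty <= 1 } *)
Definition F_linf (N : nat) (t : nat -> R) (w : Z -> R) (M Rr : nat) : Rbar :=
  Lub_Rbar (fun r => exists x : Z -> C,
              (forall j, Cmod (x j) <= 1) /\
              exists i, r = Cmod (Aop N t w M Rr x i)).

Definition sup_out (Rr : nat) (g : Z -> R) : Rbar :=
  Lub_Rbar (fun r => exists i, ~ inwin Rr i /\ r = g i).

(* Row [i] of [U^* U P_M x] is a quadrature sum: with [f = sum_j x_j phi_j] over the window
   [{-M, ..., M-1}], it equals [sum_n tau_n conj (phi_i (t_n)) f (t_n)], a Riemann sum of
   [g = conj phi_i * f] over the Voronoi cells, which have length at most [2 h].  Such a sum
   is within [h * int |g'|] of [1/2 * int g].  Parseval and Cauchy-Schwarz bound [int |f|]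
   by [sqrt M] and [int |f'|] by [M sqrt M], so with [h M <= 1] every row is [O (sqrt M)].
   If [M <= R] and [i] lies outside [{-R, ..., R-1}], the frequencies [j - i] of [g] are
   nonzero and at most [2 |i|], so [int g = 0] and only the error [O (h |i| sqrt M)] remains.
   Dividing row [i] by [w_i] gives both bounds. *)

From Stdlib Require Import Reals ZArith Lra Lia List ClassicalEpsilon.
From Coquelicot Require Import Coquelicot.
Open Scope R_scope.

Fixpoint rsum (k : nat) (f : nat -> R) : R :=
  match k with O => 0 | S k' => rsum k' f + f k' end.

Lemma rsum_ext K f g : (forall k, (k < K)%nat -> f k = g k) -> rsum K f = rsum K g.
Proof.
induction K as [|K IH]; simpl; intros H; auto.
rewrite IH by (intros; apply H; lia). rewrite H by lia. reflexivity.
Qed.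

Lemma rsum_le K f g : (forall k, (k < K)%nat -> f k <= g k) -> rsum K f <= rsum K g.
Proof.
induction K as [|K IH]; simpl; intros H; [lra|].
apply Rplus_le_compat; [apply IH; intros; apply H|apply H]; lia.
Qed.

Lemma rsum_plus K f g : rsum K (fun k => f k + g k) = rsum K f + rsum K g.
Proof. induction K; simpl; [lra|]. rewrite IHK; lra. Qed.

Lemma rsum_minus K f g : rsum K (fun k => f k - g k) = rsum K f - rsum K g.
Proof. induction K; simpl; [lra|]. rewrite IHK; lra. Qed.

Lemma rsum_scal K c f : rsum K (fun k => c * f k) = c * rsum K f.
Proof. induction K; simpl; [lra|]. rewrite IHK; lra. Qed.

Lemma rsum_mult_r K f c : rsum K f * c = rsum K (fun k => f k * c).
Proof. induction K; simpl; [ring|]. rewrite <- IHK. ring. Qed.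

Lemma rsum_const K c : rsum K (fun _ => c) = INR K * c.
Proof. induction K; simpl rsum; [simpl; lra|]. rewrite IHK, S_INR; lra. Qed.

Lemma rsum_abs K f : Rabs (rsum K f) <= rsum K (fun k => Rabs (f k)).
Proof.
induction K; simpl; [rewrite Rabs_R0; lra|].
eapply Rle_trans; [apply Rabs_triang|lra].
Qed.

Lemma rsum_delta K k g : (k < K)%nat -> (forall l, (l < K)%nat -> l <> k -> g l = 0) ->
  rsum K g = g k.
Proof.
induction K as [|K IH]; intros Hk H; [lia|]. simpl.
destruct (Nat.eq_dec k K) as [->|Hne].
- rewrite (rsum_ext K g (fun _ => 0)) by (intros; apply H; lia).
  rewrite rsum_const. lra.
- rewrite IH, (H K); try lia; [lra|]. intros; apply H; lia.
Qed.

Lemma rsum_prod K f g : rsum K f * rsum K g = rsum K (fun k => rsum K (fun l => f k * g l)).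
Proof. rewrite rsum_mult_r. apply rsum_ext. intros k _. rewrite <- rsum_scal. reflexivity. Qed.

Lemma csum_ext K f g : (forall k, (k < K)%nat -> f k = g k) -> csum K f = csum K g.
Proof.
induction K as [|K IH]; simpl; intros H; auto.
rewrite IH by (intros; apply H; lia). rewrite H by lia. reflexivity.
Qed.

Lemma csum_scal K c f : Cmult c (csum K f) = csum K (fun k => Cmult c (f k)).
Proof.
induction K; simpl; [apply injective_projections; simpl; ring|].
rewrite <- IHK. ring.
Qed.

Lemma fst_csum K f : fst (csum K f) = rsum K (fun k => fst (f k)).
Proof. induction K; simpl; auto. rewrite <- IHK. reflexivity. Qed.

Lemma snd_csum K f : snd (csum K f) = rsum K (fun k => snd (f k)).
Proof. induction K; simpl; auto. rewrite <- IHK. reflexivity. Qed.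

Lemma Cmod_csum K f : Cmod (csum K f) <= rsum K (fun k => Cmod (f k)).
Proof.
induction K; simpl; [rewrite Cmod_0; lra|].
eapply Rle_trans; [apply Cmod_triangle|lra].
Qed.

Definition lsum (F : nat -> R) (l : list nat) : R := fold_right (fun n acc => F n + acc) 0 l.

Lemma lsum_filter F p l :
  lsum F l = lsum F (filter p l) + lsum F (filter (fun n => negb (p n)) l).
Proof. induction l as [|n l IH]; simpl; [lra|]. destruct (p n); simpl; rewrite IH; lra. Qed.

Lemma lsum_snoc F l x : lsum F (l ++ x :: nil) = lsum F l + F x.
Proof. induction l; simpl; [ring|]. rewrite IHl. ring. Qed.

Lemma rsum_lsum K F : rsum K F = lsum F (seq 0 K).
Proof. induction K; [reflexivity|]. rewrite seq_S, lsum_snoc. simpl. congruence. Qed.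

Section Tiling.
Variables a b : nat -> R.

Definition tiles (l : list nat) (lo hi : R) : Prop :=
  NoDup l /\
  (forall n, In n l -> lo <= a n /\ a n < b n /\ b n <= hi) /\
  (forall n m, In n l -> In m l -> n <> m -> b n <= a m \/ b m <= a n) /\
  (forall s, lo < s < hi -> exists n, In n l /\ a n <= s <= b n).

Lemma tiles_nil lo hi : tiles nil lo hi -> hi <= lo.
Proof.
intros [_ [_ [_ Hcov]]]. apply Rnot_lt_le. intros Hlt.
destruct (Hcov ((lo + hi) / 2)) as [n [[] _]]. lra.
Qed.

Let left_of k n : bool := if Rle_dec (b n) (a k) then true else false.

Lemma tiles_split k rest lo hi : tiles (k :: rest) lo hi ->
  tiles (filter (left_of k) rest) lo (a k) /\
  tiles (filter (fun n => negb (left_of k n)) rest) (b k) hi.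
Proof.
intros [Hnd [Hin [Hno Hcov]]]. inversion Hnd as [|? ? Hk Hnd']; subst.
destruct (Hin k (or_introl eq_refl)) as [Hk1 [Hk2 Hk3]].
assert (Hside : forall n, In n rest -> b n <= a k \/ b k <= a n).
{ intros n Hn. apply Hno; [right|left|intros ->]; auto. }
assert (HL : forall n, In n (filter (left_of k) rest) <-> In n rest /\ b n <= a k).
{ intros n. rewrite filter_In. unfold left_of. destruct Rle_dec; intuition discriminate. }
assert (HR : forall n, In n (filter (fun n => negb (left_of k n)) rest) <->
                       In n rest /\ b k <= a n).
{ intros n. rewrite filter_In. unfold left_of. split.
  - intros [Hn Hp]. split; auto. destruct Rle_dec; [discriminate|].
    destruct (Hside n Hn); [contradiction|auto].
  - intros [Hn Hkn]. split; auto. destruct (Hin n (or_intror Hn)) as [_ [? _]].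
    destruct Rle_dec; [lra|reflexivity]. }
split; refine (conj _ (conj _ (conj _ _))).
- apply NoDup_filter; auto.
- intros n Hn. apply HL in Hn. destruct (Hin n (or_intror (proj1 Hn))). lra.
- intros n m Hn Hm. apply Hno; right; [apply HL in Hn|apply HL in Hm]; tauto.
- intros s Hs. destruct (Hcov s) as [n [[<-|Hn] Hns]]; [lra|lra|].
  exists n. split; auto. apply HL. split; auto. destruct (Hside n Hn); lra.
- apply NoDup_filter; auto.
- intros n Hn. apply HR in Hn. destruct (Hin n (or_intror (proj1 Hn))). lra.
- intros n m Hn Hm. apply Hno; right; [apply HR in Hn|apply HR in Hm]; tauto.
- intros s Hs. destruct (Hcov s) as [n [[<-|Hn] Hns]]; [lra|lra|].
  exists n. split; auto. apply HR. split; auto. destruct (Hside n Hn); lra.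
Qed.

Lemma tiles_telescope (Ph : R -> R) l lo hi : tiles l lo hi -> lo <= hi ->
  lsum (fun n => Ph (b n) - Ph (a n)) l = Ph hi - Ph lo.
Proof.
remember (length l) as len eqn:Hlen. revert l lo hi Hlen.
induction len as [len IH] using lt_wf_ind. intros [|k rest] lo hi Hlen Ht Hlh.
- apply tiles_nil in Ht. simpl. replace hi with lo by lra. ring.
- pose proof Ht as [_ [Hin _]].
  destruct (Hin k (or_introl eq_refl)) as [Hk1 [Hk2 Hk3]].
  destruct (tiles_split k rest lo hi Ht) as [HtL HtR].
  simpl in Hlen |- *. rewrite (lsum_filter _ (left_of k) rest).
  rewrite (IH _ ltac:(rewrite Hlen; apply Nat.lt_succ_r, filter_length_le) _ _ _ eq_refl HtL),
          (IH _ ltac:(rewrite Hlen; apply Nat.lt_succ_r, filter_length_le) _ _ _ eq_refl HtR)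
    by lra.
  ring.
Qed.

End Tiling.

Lemma tiling_telescope (N : nat) (a b : nat -> R) (lo hi : R) (Ph : R -> R) :
  lo <= hi ->
  (forall n, (n < N)%nat -> lo <= a n /\ a n < b n /\ b n <= hi) ->
  (forall n m, (n < N)%nat -> (m < N)%nat -> n <> m -> b n <= a m \/ b m <= a n) ->
  (forall s, lo < s < hi -> exists n, (n < N)%nat /\ a n <= s <= b n) ->
  rsum N (fun n => Ph (b n) - Ph (a n)) = Ph hi - Ph lo.
Proof.
intros Hlh Hin Hno Hcov. rewrite rsum_lsum. apply tiles_telescope; auto.
refine (conj (seq_NoDup _ _) (conj _ (conj _ _))).
- intros n Hn; apply in_seq in Hn; apply Hin; lia.
- intros n m Hn Hm; apply in_seq in Hn; apply in_seq in Hm; apply Hno; lia.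
- intros s Hs; destruct (Hcov s Hs) as [n [? ?]]; exists n; split; auto; apply in_seq; lia.
Qed.

Lemma ex_RInt_continuous_R (f : R -> R) a b : (forall x, continuous f x) -> ex_RInt f a b.
Proof. intros H. apply (ex_RInt_continuous (V := R_CompleteNormedModule)); auto. Qed.

Lemma RInt_Chasles_continuous (f : R -> R) a b c : (forall x, continuous f x) ->
  RInt f a b + RInt f b c = RInt f a c.
Proof. intros H. apply (RInt_Chasles f a b c); apply ex_RInt_continuous_R; auto. Qed.

Lemma continuous_Rabs_comp (f : R -> R) : (forall x, continuous f x) ->
  forall x, continuous (fun y => Rabs (f y)) x.
Proof. intros H x. apply (continuous_comp f Rabs); [apply H|apply continuous_Rabs]. Qed.

Lemma derivable_continuous (u du : R -> R) : (forall x, is_derive u x (du x)) ->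
  forall x, continuous u x.
Proof.
intros H x. apply (ex_derive_continuous (K := R_AbsRing) (V := R_NormedModule)).
eexists; apply H.
Qed.

Lemma RInt_subinterval_le (f : R -> R) x y r s : x <= r -> r <= s -> s <= y ->
  (forall z, continuous f z) -> (forall z, 0 <= f z) -> RInt f r s <= RInt f x y.
Proof.
intros Hxr Hrs Hsy Hc H0.
assert (Hpos : forall p q, p <= q -> 0 <= RInt f p q)
  by (intros; apply RInt_ge_0; auto using ex_RInt_continuous_R).
rewrite <- (RInt_Chasles_continuous f x r y), <- (RInt_Chasles_continuous f r s y) by auto.
pose proof (Hpos x r Hxr). pose proof (Hpos s y Hsy). lra.
Qed.

Lemma oscillation_le_RInt_Rabs_derive (u du : R -> R) :
  (forall x, is_derive u x (du x)) -> (forall x, continuous du x) ->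
  forall x y s r, x <= s <= y -> x <= r <= y ->
  Rabs (u s - u r) <= RInt (fun z => Rabs (du z)) x y.
Proof.
intros Hd Hc.
assert (Hord : forall x y s r, x <= r <= s -> s <= y ->
          Rabs (u s - u r) <= RInt (fun z => Rabs (du z)) x y).
{ intros x y s r [Hxr Hrs] Hsy.
  replace (u s - u r) with (RInt du r s)
    by (apply is_RInt_unique, (is_RInt_derive u du); intros; auto).
  eapply Rle_trans; [apply abs_RInt_le; auto using ex_RInt_continuous_R|].
  apply RInt_subinterval_le; auto using continuous_Rabs_comp. intros; apply Rabs_pos. }
intros x y s r Hs Hr. destruct (Rle_dec r s).
- apply Hord; lra.
- rewrite Rabs_minus_sym. apply Hord; lra.
Qed.

Lemma riemann_cell_error (w : R -> R) a b t K : a <= t <= b -> (forall x, continuous w x) ->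
  (forall s, a <= s <= b -> Rabs (w s - w t) <= K) ->
  Rabs ((b - a) * w t - RInt w a b) <= (b - a) * K.
Proof.
intros Ht Hc HK.
assert (H1 : RInt (fun _ => w t - K) a b <= RInt w a b).
{ apply RInt_le; try lra; auto using ex_RInt_continuous_R, ex_RInt_const.
  intros s Hs. specialize (HK s ltac:(lra)). apply Rabs_le_between in HK. lra. }
assert (H2 : RInt w a b <= RInt (fun _ => w t + K) a b).
{ apply RInt_le; try lra; auto using ex_RInt_continuous_R, ex_RInt_const.
  intros s Hs. specialize (HK s ltac:(lra)). apply Rabs_le_between in HK. lra. }
rewrite !RInt_const in H1, H2. change (scal (b - a) ?c) with ((b - a) * c) in H1, H2.
apply Rabs_le. lra.
Qed.

Lemma tiling_riemann_sum_error (N : nat) (t a b : nat -> R) (h : R) (w rho : R -> R) :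
  (forall n, (n < N)%nat ->
     -1 <= a n /\ a n < b n /\ b n <= 1 /\ a n <= t n <= b n /\ b n - a n <= 2 * h) ->
  (forall n m, (n < N)%nat -> (m < N)%nat -> n <> m -> b n <= a m \/ b m <= a n) ->
  (forall s, -1 < s < 1 -> exists n, (n < N)%nat /\ a n <= s <= b n) ->
  (forall x, continuous w x) -> (forall x, continuous rho x) -> (forall x, 0 <= rho x) ->
  (forall x y s r, x <= s <= y -> x <= r <= y -> Rabs (w s - w r) <= RInt rho x y) ->
  Rabs (rsum N (fun n => (b n - a n) * w (t n)) - RInt w (-1) 1) <= 2 * h * RInt rho (-1) 1.
Proof.
intros Hcell Hno Hcov Hw Hr Hr0 Hosc.
assert (Hsplit : forall f, (forall x, continuous f x) ->
          RInt f (-1) 1 = rsum N (fun n => RInt f (a n) (b n))).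
{ intros f Hf.
  rewrite (rsum_ext N _ (fun n => RInt f (-1) (b n) - RInt f (-1) (a n))).
  - rewrite (tiling_telescope N a b (-1) 1 (fun x => RInt f (-1) x)); auto; try lra.
    + rewrite RInt_point. simpl. unfold zero; simpl. lra.
    + intros n Hn; destruct (Hcell n Hn) as [? [? [? ?]]]; lra.
  - intros k _. rewrite <- (RInt_Chasles_continuous f (-1) (a k) (b k)); auto. lra. }
rewrite (Hsplit w Hw), (Hsplit rho Hr), <- rsum_minus, <- rsum_scal.
eapply Rle_trans; [apply rsum_abs|]. apply rsum_le. intros n Hn.
destruct (Hcell n Hn) as [H1 [H2 [H3 [H4 H5]]]].
eapply Rle_trans.
- apply (riemann_cell_error w (a n) (b n) (t n) (RInt rho (a n) (b n)));
    [exact H4|exact Hw|intros s Hs; apply Hosc; lra].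
- apply Rmult_le_compat_r; [|lra].
  apply RInt_ge_0; auto using ex_RInt_continuous_R. lra.
Qed.

Definition trigpoly (K : nat) (c : nat -> C) (m : nat -> Z) (s : R) : C :=
  csum K (fun k => Cmult (phi (m k) s) (c k)).

(* [(0, m pi)] is [i pi m], the factor by which differentiation multiplies [phi m]. *)
Definition deriv_coef (c : nat -> C) (m : nat -> Z) (k : nat) : C :=
  Cmult (0, IZR (m k) * PI) (c k).

Definition energy (K : nat) (c : nat -> C) : R := rsum K (fun k => Cmod (c k) ^ 2).

Lemma fst_phi_mult j s (z : C) :
  fst (Cmult (phi j s) z) = fst z * cos (IZR j * PI * s) - snd z * sin (IZR j * PI * s).
Proof. destruct z; unfold phi, Cmult; simpl; ring. Qed.

Lemma snd_phi_mult j s (z : C) :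
  snd (Cmult (phi j s) z) = fst z * sin (IZR j * PI * s) + snd z * cos (IZR j * PI * s).
Proof. destruct z; unfold phi, Cmult; simpl; ring. Qed.

Lemma fst_trigpoly K c m s : fst (trigpoly K c m s) =
  rsum K (fun k => fst (c k) * cos (IZR (m k) * PI * s) - snd (c k) * sin (IZR (m k) * PI * s)).
Proof. unfold trigpoly. rewrite fst_csum. apply rsum_ext. intros. apply fst_phi_mult. Qed.

Lemma snd_trigpoly K c m s : snd (trigpoly K c m s) =
  rsum K (fun k => fst (c k) * sin (IZR (m k) * PI * s) + snd (c k) * cos (IZR (m k) * PI * s)).
Proof. unfold trigpoly. rewrite snd_csum. apply rsum_ext. intros. apply snd_phi_mult. Qed.

Lemma is_derive_rsum K (g dg : nat -> R -> R) x :
  (forall k, (k < K)%nat -> is_derive (g k) x (dg k x)) ->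
  is_derive (fun s => rsum K (fun k => g k s)) x (rsum K (fun k => dg k x)).
Proof.
induction K as [|K IH]; intros H; simpl.
- apply (is_derive_const (K := R_AbsRing) (V := R_NormedModule) 0).
- apply (is_derive_plus (K := R_AbsRing) (V := R_NormedModule)); [apply IH|apply H];
    intros; try apply H; lia.
Qed.

Lemma is_derive_fst_trigpoly K c m x :
  is_derive (fun s => fst (trigpoly K c m s)) x (fst (trigpoly K (deriv_coef c m) m x)).
Proof.
apply (is_derive_ext (fun s => rsum K (fun k =>
          fst (c k) * cos (IZR (m k) * PI * s) - snd (c k) * sin (IZR (m k) * PI * s)))).
{ intros s. symmetry. apply fst_trigpoly. }
rewrite fst_trigpoly.
apply (is_derive_rsum K
  (fun k s => fst (c k) * cos (IZR (m k) * PI * s) - snd (c k) * sin (IZR (m k) * PI * s))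
  (fun k s => fst (deriv_coef c m k) * cos (IZR (m k) * PI * s)
              - snd (deriv_coef c m k) * sin (IZR (m k) * PI * s))).
intros k _.
unfold deriv_coef. destruct (c k) as [p q]. unfold Cmult; simpl. auto_derive; auto. ring.
Qed.

Lemma is_derive_snd_trigpoly K c m x :
  is_derive (fun s => snd (trigpoly K c m s)) x (snd (trigpoly K (deriv_coef c m) m x)).
Proof.
apply (is_derive_ext (fun s => rsum K (fun k =>
          fst (c k) * sin (IZR (m k) * PI * s) + snd (c k) * cos (IZR (m k) * PI * s)))).
{ intros s. symmetry. apply snd_trigpoly. }
rewrite snd_trigpoly.
apply (is_derive_rsum K
  (fun k s => fst (c k) * sin (IZR (m k) * PI * s) + snd (c k) * cos (IZR (m k) * PI * s))
  (fun k s => fst (deriv_coef c m k) * sin (IZR (m k) * PI * s)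
              + snd (deriv_coef c m k) * cos (IZR (m k) * PI * s))).
intros k _.
unfold deriv_coef. destruct (c k) as [p q]. unfold Cmult; simpl. auto_derive; auto. ring.
Qed.

Lemma is_RInt_0 a b : is_RInt (fun _ => 0) a b 0.
Proof.
pose proof (is_RInt_const (V := R_NormedModule) a b 0) as H.
change (scal (b - a) 0) with ((b - a) * 0) in H. rewrite Rmult_0_r in H. exact H.
Qed.

Lemma is_RInt_rsum K (g : nat -> R -> R) (I : nat -> R) a b :
  (forall k, (k < K)%nat -> is_RInt (g k) a b (I k)) ->
  is_RInt (fun s => rsum K (fun k => g k s)) a b (rsum K I).
Proof.
induction K as [|K IH]; intros H; simpl.
- apply is_RInt_0.
- apply (is_RInt_plus (V := R_NormedModule) (fun s => rsum K (fun k => g k s)) (g K));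
    [apply IH; intros; apply H|apply H]; lia.
Qed.

Lemma is_RInt_trig_mode (p q : R) (d : Z) :
  is_RInt (fun s => p * cos (IZR d * PI * s) + q * sin (IZR d * PI * s)) (-1) 1
    (if Z.eq_dec d 0 then 2 * p else 0).
Proof.
destruct (Z.eq_dec d 0) as [->|Hd].
- apply (is_RInt_ext (fun _ => p)).
  { intros x _. rewrite !Rmult_0_l, cos_0, sin_0, Rmult_1_r, Rmult_0_r, Rplus_0_r. reflexivity. }
  replace (2 * p) with ((1 - -1) * p) by ring.
  apply (is_RInt_const (V := R_NormedModule)).
- assert (Hd' : IZR d <> 0) by (apply not_0_IZR; auto).
  assert (Ha : IZR d * PI <> 0)
    by (apply Rmult_integral_contrapositive; split; auto using PI_neq0).
  set (F := fun s => (p * sin (IZR d * PI * s) - q * cos (IZR d * PI * s)) / (IZR d * PI)).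
  replace 0 with (minus (F 1) (F (-1))).
  + apply (is_RInt_derive (V := R_CompleteNormedModule)).
    * intros z _. unfold F. auto_derive; auto. field; split; auto using PI_neq0.
    * intros z _. apply (derivable_continuous _ (fun s => - p * sin (IZR d * PI * s) * (IZR d * PI)
                  + q * cos (IZR d * PI * s) * (IZR d * PI))).
      intros y. auto_derive; auto. ring.
  + unfold F, minus, plus, opp; simpl.
    replace (IZR d * PI * -1) with (- (IZR d * PI * 1)) by ring.
    rewrite sin_neg, cos_neg, Rmult_1_r, (sin_eq_0_1 (IZR d * PI)) by (exists d; reflexivity).
    field; split; auto using PI_neq0.
Qed.

Lemma is_RInt_fst_trigpoly_0 K c m : (forall k, (k < K)%nat -> m k <> 0%Z) ->
  is_RInt (fun s => fst (trigpoly K c m s)) (-1) 1 0.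
Proof.
intros Hm.
apply (is_RInt_ext (fun s => rsum K (fun k =>
          fst (c k) * cos (IZR (m k) * PI * s) + - snd (c k) * sin (IZR (m k) * PI * s)))).
{ intros s _. rewrite fst_trigpoly. apply rsum_ext. intros. ring. }
replace 0 with (rsum K (fun k => if Z.eq_dec (m k) 0 then 2 * fst (c k) else 0)).
- apply is_RInt_rsum. intros k _. apply is_RInt_trig_mode.
- rewrite (rsum_ext K _ (fun _ => 0)), rsum_const; [ring|].
  intros k Hk. destruct Z.eq_dec; [exfalso; apply (Hm k Hk)|]; auto.
Qed.

Lemma is_RInt_snd_trigpoly_0 K c m : (forall k, (k < K)%nat -> m k <> 0%Z) ->
  is_RInt (fun s => snd (trigpoly K c m s)) (-1) 1 0.
Proof.
intros Hm.
apply (is_RInt_ext (fun s => rsum K (fun k =>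
          snd (c k) * cos (IZR (m k) * PI * s) + fst (c k) * sin (IZR (m k) * PI * s)))).
{ intros s _. rewrite snd_trigpoly. apply rsum_ext. intros. ring. }
replace 0 with (rsum K (fun k => if Z.eq_dec (m k) 0 then 2 * snd (c k) else 0)).
- apply is_RInt_rsum. intros k _. apply is_RInt_trig_mode.
- rewrite (rsum_ext K _ (fun _ => 0)), rsum_const; [ring|].
  intros k Hk. destruct Z.eq_dec; [exfalso; apply (Hm k Hk)|]; auto.
Qed.

Lemma Cmod_trigpoly_sq K c m s :
  Cmod (trigpoly K c m s) ^ 2 = rsum K (fun k => rsum K (fun l =>
      (fst (c k) * fst (c l) + snd (c k) * snd (c l)) * cos (IZR (m k - m l) * PI * s)
    + (fst (c k) * snd (c l) - snd (c k) * fst (c l)) * sin (IZR (m k - m l) * PI * s))).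
Proof.
rewrite Cmod2_alt. unfold Re, Im. rewrite fst_trigpoly, snd_trigpoly.
rewrite <- !Rsqr_pow2. unfold Rsqr. rewrite !rsum_prod, <- rsum_plus.
apply rsum_ext; intros k _. rewrite <- rsum_plus. apply rsum_ext; intros l _.
rewrite minus_IZR.
replace ((IZR (m k) - IZR (m l)) * PI * s) with (IZR (m k) * PI * s - IZR (m l) * PI * s) by ring.
rewrite cos_minus, sin_minus. ring.
Qed.

Lemma parseval_trigpoly K c m : (forall k l, (k < K)%nat -> (l < K)%nat -> m k = m l -> k = l) ->
  is_RInt (fun s => Cmod (trigpoly K c m s) ^ 2) (-1) 1 (2 * energy K c).
Proof.
intros Hinj. apply (is_RInt_ext _ _ _ _ _ (fun s _ => eq_sym (Cmod_trigpoly_sq K c m s))).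
unfold energy. rewrite <- rsum_scal. apply is_RInt_rsum. intros k Hk.
replace (2 * Cmod (c k) ^ 2) with (rsum K (fun l => if Z.eq_dec (m k - m l) 0
            then 2 * (fst (c k) * fst (c l) + snd (c k) * snd (c l)) else 0)).
- apply is_RInt_rsum. intros l _. apply is_RInt_trig_mode.
- rewrite (rsum_delta K k); auto.
  + rewrite Z.sub_diag, Cmod2_alt. unfold Re, Im. destruct Z.eq_dec; [ring|congruence].
  + intros l Hl Hlk. destruct Z.eq_dec as [e|]; [|reflexivity].
    exfalso. apply Hlk, eq_sym, Hinj; auto. lia.
Qed.

(* Cauchy-Schwarz on [-1, 1], via [|u| <= u^2 / (2 l) + l / 2] for every [l > 0]. *)
Lemma RInt_Rabs_le_sqrt (u g : R -> R) G : (forall x, continuous u x) ->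
  is_RInt g (-1) 1 G -> (forall s, u s ^ 2 <= g s) ->
  RInt (fun s => Rabs (u s)) (-1) 1 <= sqrt (2 * G).
Proof.
intros Hu Hg Hug.
assert (HG : 0 <= G).
{ rewrite <- (is_RInt_unique _ _ _ _ Hg). apply RInt_ge_0; [lra|eexists; exact Hg|].
  intros s _. eapply Rle_trans; [apply pow2_ge_0|apply Hug]. }
assert (Hl : forall l, 0 < l -> RInt (fun s => Rabs (u s)) (-1) 1 <= G / (2 * l) + l).
{ intros l Hl.
  assert (Hmaj : is_RInt (fun s => / (2 * l) * g s + l / 2) (-1) 1 (G / (2 * l) + l)).
  { replace (G / (2 * l) + l) with (plus (scal (/ (2 * l)) G) (scal (1 - -1) (l / 2)))
      by (unfold plus, scal; simpl; unfold mult; simpl; field; lra).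
    apply (is_RInt_plus (V := R_NormedModule));
      [apply (is_RInt_scal (V := R_NormedModule) g _ _ _ _ Hg)
      |apply (is_RInt_const (V := R_NormedModule))]. }
  rewrite <- (is_RInt_unique _ _ _ _ Hmaj).
  apply RInt_le; [lra|apply ex_RInt_continuous_R, continuous_Rabs_comp, Hu|eexists; exact Hmaj|].
  intros s _. specialize (Hug s). rewrite <- pow2_abs in Hug.
  pose proof (Rle_0_sqr (Rabs (u s) - l)). unfold Rsqr in *.
  apply (Rmult_le_reg_l (2 * l)); [lra|].
  replace (2 * l * (/ (2 * l) * g s + l / 2)) with (g s + l * l) by (field; lra). nra. }
destruct (Rle_lt_or_eq_dec _ _ HG) as [Hpos| <-].
- set (r := sqrt (2 * G)).
  assert (Hr : 0 < r) by (apply sqrt_lt_R0; lra).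
  assert (Hrr : r * r = 2 * G) by (apply sqrt_sqrt; lra).
  replace r with (G / (2 * (r / 2)) + r / 2) by (replace G with (r * r / 2) by lra; field; lra).
  apply Hl. lra.
- rewrite Rmult_0_r, sqrt_0. apply Rnot_lt_le. intros Hlt.
  specialize (Hl _ (Rlt_mult_inv_pos _ 2 Hlt Rlt_0_2)).
  unfold Rdiv in Hl. rewrite Rmult_0_l in Hl. lra.
Qed.

Lemma RInt_Rabs_le_energy K c m (u : R -> R) :
  (forall k l, (k < K)%nat -> (l < K)%nat -> m k = m l -> k = l) ->
  (forall x, continuous u x) -> (forall s, Rabs (u s) <= Cmod (trigpoly K c m s)) ->
  RInt (fun s => Rabs (u s)) (-1) 1 <= 2 * sqrt (energy K c).
Proof.
intros Hinj Hu Hle.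
replace (2 * sqrt (energy K c)) with (sqrt (2 * (2 * energy K c))).
- apply (RInt_Rabs_le_sqrt u _ _ Hu (parseval_trigpoly K c m Hinj)).
  intros s. rewrite <- pow2_abs. apply pow_incr. split; [apply Rabs_pos|apply Hle].
- rewrite <- Rmult_assoc, sqrt_mult_alt by lra. rewrite sqrt_square; lra.
Qed.

Lemma Cmod_deriv_coef c m k : Cmod (deriv_coef c m k) = Rabs (IZR (m k) * PI) * Cmod (c k).
Proof.
unfold deriv_coef. rewrite Cmod_mult. f_equal.
unfold Cmod; simpl. rewrite <- sqrt_Rsqr_abs. f_equal. unfold Rsqr. ring.
Qed.

Lemma energy_deriv_coef_le K c m B : (forall k, (k < K)%nat -> Rabs (IZR (m k) * PI) <= B) ->
  energy K (deriv_coef c m) <= B ^ 2 * energy K c.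
Proof.
intros HB. unfold energy. rewrite <- rsum_scal. apply rsum_le. intros k Hk.
rewrite Cmod_deriv_coef, Rpow_mult_distr. apply Rmult_le_compat_r; [apply pow2_ge_0|].
apply pow_incr. split; [apply Rabs_pos|auto].
Qed.

Lemma energy_le_card K c : (forall k, (k < K)%nat -> Cmod (c k) <= 1) -> energy K c <= INR K.
Proof.
intros Hc. unfold energy. rewrite <- (Rmult_1_r (INR K)), <- rsum_const. apply rsum_le.
intros k Hk. rewrite <- (pow1 2). apply pow_incr. split; [apply Cmod_ge_0|auto].
Qed.

Lemma Rmax_le_iff x y z : Rmax x y <= z <-> x <= z /\ y <= z.
Proof. unfold Rmax. destruct Rle_dec; split; intros; try split; lra. Qed.

Lemma le_Rmin_iff x y z : z <= Rmin x y <-> z <= x /\ z <= y.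
Proof. unfold Rmin. destruct Rle_dec; split; intros; try split; lra. Qed.

(* In one dimension the Voronoi cell of [t n] is the interval between the midpoints to its
   nearest neighbours on either side (or the end point of [[-1, 1]]). *)
Fixpoint voronoi_left (t : nat -> R) (n k : nat) : R :=
  match k with
  | O => -1
  | S k' => Rmax (voronoi_left t n k')
                 (if Rlt_dec (t k') (t n) then (t k' + t n) / 2 else -1)
  end.

Fixpoint voronoi_right (t : nat -> R) (n k : nat) : R :=
  match k with
  | O => 1
  | S k' => Rmin (voronoi_right t n k')
                 (if Rlt_dec (t n) (t k') then (t k' + t n) / 2 else 1)
  end.

Lemma voronoi_left_le_iff t n k s : voronoi_left t n k <= s <->
  -1 <= s /\ forall m, (m < k)%nat -> t m < t n -> (t m + t n) / 2 <= s.
Proof.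
induction k as [|k IH]; simpl.
- split; [intros; split; auto; intros; lia|tauto].
- rewrite Rmax_le_iff, IH. split.
  + intros [[H1 H2] H3]. split; auto. intros m Hm Hlt.
    destruct (Nat.eq_dec m k) as [->|]; [destruct Rlt_dec; [auto|contradiction]|].
    apply H2; [lia|auto].
  + intros [H1 H2]. split; [split; auto|].
    destruct Rlt_dec; [apply H2; auto|auto].
Qed.

Lemma le_voronoi_right_iff t n k s : s <= voronoi_right t n k <->
  s <= 1 /\ forall m, (m < k)%nat -> t n < t m -> s <= (t m + t n) / 2.
Proof.
induction k as [|k IH]; simpl.
- split; [intros; split; auto; intros; lia|tauto].
- rewrite le_Rmin_iff, IH. split.
  + intros [[H1 H2] H3]. split; auto. intros m Hm Hlt.
    destruct (Nat.eq_dec m k) as [->|]; [destruct Rlt_dec; [auto|contradiction]|].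
    apply H2; [lia|auto].
  + intros [H1 H2]. split; [split; auto|].
    destruct Rlt_dec; [apply H2; auto|auto].
Qed.

Lemma Rabs_sub_le_iff_midpoint_le x y s : x < y ->
  (Rabs (s - y) <= Rabs (s - x) <-> (x + y) / 2 <= s).
Proof. intros H. unfold Rabs; destruct Rcase_abs; destruct Rcase_abs; split; intros; lra. Qed.

Lemma Rabs_sub_le_iff_le_midpoint x y s : y < x ->
  (Rabs (s - y) <= Rabs (s - x) <-> s <= (x + y) / 2).
Proof. intros H. unfold Rabs; destruct Rcase_abs; destruct Rcase_abs; split; intros; lra. Qed.

Lemma voronoi_left_lt t n k : -1 < t n -> voronoi_left t n k < t n.
Proof.
intros H. induction k; simpl; auto.
apply Rmax_lub_lt; auto. destruct Rlt_dec; lra.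
Qed.

Lemma voronoi_right_gt t n k : t n < 1 -> t n < voronoi_right t n k.
Proof.
intros H. induction k; simpl; auto.
apply Rmin_glb_lt; auto. destruct Rlt_dec; lra.
Qed.

Lemma exists_nearest (t : nat -> R) N s : (0 < N)%nat ->
  exists n, (n < N)%nat /\ forall m, (m < N)%nat -> Rabs (s - t n) <= Rabs (s - t m).
Proof.
intros HN. destruct N as [|K]; [lia|]. clear HN. induction K as [|K IH].
- exists 0%nat. split; auto. intros m Hm. replace m with 0%nat by lia. lra.
- destruct IH as [n [Hn H]].
  destruct (Rle_dec (Rabs (s - t n)) (Rabs (s - t (S K)))) as [Hle|Hgt].
  + exists n. split; [lia|]. intros m Hm.
    destruct (Nat.eq_dec m (S K)) as [->|]; [auto|apply H; lia].
  + exists (S K). split; [lia|]. intros m Hm.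
    destruct (Nat.eq_dec m (S K)) as [->|]; [lra|]. specialize (H m ltac:(lia)). lra.
Qed.

Lemma mindist_attained t k s : exists m, (m <= k)%nat /\ mindist t k s = Rabs (s - t m).
Proof.
induction k as [|k [m [Hm E]]]; simpl; [exists 0%nat; auto|].
unfold Rmin. destruct Rle_dec; [exists m|exists (S k)]; split; auto.
Qed.

Lemma mindist_nonneg t k s : 0 <= mindist t k s.
Proof. destruct (mindist_attained t k s) as [m [_ ->]]. apply Rabs_pos. Qed.

Lemma mindist_le_first t k s : mindist t k s <= Rabs (s - t O).
Proof. induction k; simpl; [lra|]. eapply Rle_trans; [apply Rmin_l|auto]. Qed.

Section VoronoiCells.
Variable N : nat.
Variable t : nat -> R.
Hypothesis HN : (0 < N)%nat.
Hypothesis Ht : forall n, (n < N)%nat -> -1 <= t n <= 1.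
Hypothesis Hinj : forall n m, (n < N)%nat -> (m < N)%nat -> t n = t m -> n = m.

Lemma voronoi_iff n s : (n < N)%nat ->
  voronoi N t n s <-> -1 < s < 1 /\ voronoi_left t n N <= s <= voronoi_right t n N.
Proof.
intros Hn. unfold voronoi. rewrite voronoi_left_le_iff, le_voronoi_right_iff. split.
- intros [Hs H]. split; auto. split; split; try lra; intros m Hm Hlt.
  + apply (Rabs_sub_le_iff_midpoint_le (t m) (t n) s Hlt), H; auto. intros ->; lra.
  + apply (Rabs_sub_le_iff_le_midpoint (t m) (t n) s Hlt), H; auto. intros ->; lra.
- intros [Hs [[_ H1] [_ H2]]]. split; auto. intros m Hm Hne.
  assert (t m <> t n) by (intros E; apply Hne, Hinj; auto).
  destruct (Rlt_dec (t m) (t n)).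
  + apply (Rabs_sub_le_iff_midpoint_le (t m) (t n) s); auto.
  + apply (Rabs_sub_le_iff_le_midpoint (t m) (t n) s); [lra|]. apply H2; auto; lra.
Qed.

Lemma voronoi_cell_bounds n : (n < N)%nat ->
  -1 <= voronoi_left t n N /\ voronoi_left t n N < voronoi_right t n N /\
  voronoi_right t n N <= 1 /\ voronoi_left t n N <= t n <= voronoi_right t n N.
Proof.
intros Hn. destruct (Ht n Hn) as [H1 H2].
pose proof (proj1 (voronoi_left_le_iff t n N _) (Rle_refl _)) as [Hlo _].
pose proof (proj1 (le_voronoi_right_iff t n N _) (Rle_refl _)) as [Hhi _].
assert (Hl : voronoi_left t n N <= t n)
  by (apply voronoi_left_le_iff; split; auto; intros; lra).
assert (Hr : t n <= voronoi_right t n N)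
  by (apply le_voronoi_right_iff; split; auto; intros; lra).
repeat split; auto.
destruct (Rlt_dec (-1) (t n)) as [Hgt|Hle].
- pose proof (voronoi_left_lt t n N Hgt). lra.
- pose proof (voronoi_right_gt t n N ltac:(lra)). lra.
Qed.

Lemma voronoi_cells_disjoint n m : (n < N)%nat -> (m < N)%nat -> n <> m ->
  voronoi_right t n N <= voronoi_left t m N \/ voronoi_right t m N <= voronoi_left t n N.
Proof.
assert (Hsep : forall p q, (p < N)%nat -> (q < N)%nat -> t p < t q ->
          voronoi_right t p N <= voronoi_left t q N).
{ intros p q Hp Hq Hlt.
  pose proof (proj2 (proj1 (voronoi_left_le_iff t q N _) (Rle_refl _)) p Hp Hlt).
  pose proof (proj2 (proj1 (le_voronoi_right_iff t p N _) (Rle_refl _)) q Hq Hlt).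
  lra. }
intros Hn Hm Hnm. assert (t n <> t m) by (intros E; apply Hnm, Hinj; auto).
destruct (Rlt_dec (t n) (t m)); [left|right]; apply Hsep; auto; lra.
Qed.

Lemma voronoi_cells_cover s : -1 < s < 1 ->
  exists n, (n < N)%nat /\ voronoi_left t n N <= s <= voronoi_right t n N.
Proof.
intros Hs. destruct (exists_nearest t N s HN) as [n [Hn H]]. exists n. split; auto.
apply (voronoi_iff n s Hn). split; [exact Hs|intros m Hm _; apply H; auto].
Qed.

Lemma tau_eq n : (n < N)%nat -> tau N t n = (voronoi_right t n N - voronoi_left t n N) / 2.
Proof.
intros Hn. destruct (voronoi_cell_bounds n Hn) as [H1 [H2 [H3 _]]].
set (lo := voronoi_left t n N) in *. set (hi := voronoi_right t n N) in *.
set (f := fun s => if excluded_middle_informative (voronoi N t n s) then / 2 else 0).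
assert (Hout : forall a b, a <= b -> (forall x, a < x < b -> ~ (lo <= x <= hi)) ->
          is_RInt f a b 0).
{ intros a b Hab Hx.
  apply (is_RInt_ext (fun _ => 0)).
  - intros x Hx'. rewrite Rmin_left, Rmax_right in Hx' by lra. unfold f.
    destruct excluded_middle_informative as [v|]; auto.
    apply (voronoi_iff n x Hn) in v. exfalso; apply (Hx x Hx'); tauto.
  - apply is_RInt_0. }
assert (I1 : is_RInt f (-1) lo 0) by (apply Hout; [lra|intros; lra]).
assert (I3 : is_RInt f hi 1 0) by (apply Hout; [lra|intros; lra]).
assert (I2 : is_RInt f lo hi ((hi - lo) * / 2)).
{ apply (is_RInt_ext (fun _ => / 2)).
  - intros x Hx. rewrite Rmin_left, Rmax_right in Hx by lra. unfold f.
    destruct excluded_middle_informative as [|v]; auto.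
    exfalso; apply v, (voronoi_iff n x Hn). unfold lo, hi in *. repeat split; lra.
  - apply (is_RInt_const (V := R_NormedModule)). }
unfold tau. fold f. apply is_RInt_unique.
replace ((hi - lo) / 2) with (plus (plus 0 ((hi - lo) * / 2)) 0)
  by (unfold plus; simpl; field).
exact (is_RInt_Chasles f _ _ _ _ _ (is_RInt_Chasles f _ _ _ _ _ I1 I2) I3).
Qed.

Lemma tau_nonneg n : (n < N)%nat -> 0 <= tau N t n.
Proof.
intros Hn. rewrite tau_eq by auto.
destruct (voronoi_cell_bounds n Hn) as [_ [? _]]. lra.
Qed.

Variable h : R.
Hypothesis Hh : forall s, -1 < s < 1 -> mindist t (N - 1) s <= h.

Lemma density_nonneg : 0 <= h.
Proof. eapply Rle_trans; [apply (mindist_nonneg t (N - 1) 0)|]. apply Hh; lra. Qed.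

Lemma voronoi_dist_le n s : (n < N)%nat -> voronoi N t n s -> Rabs (s - t n) <= h.
Proof.
intros Hn [Hs H]. destruct (mindist_attained t (N - 1) s) as [m [Hm E]].
eapply Rle_trans; [|apply (Hh s Hs)]. rewrite E.
destruct (Nat.eq_dec m n) as [->|Hne]; [lra|]. apply H; auto; lia.
Qed.

Lemma voronoi_cell_length_le n : (n < N)%nat ->
  voronoi_right t n N - voronoi_left t n N <= 2 * h.
Proof.
intros Hn. destruct (voronoi_cell_bounds n Hn) as [H1 [H2 [H3 H4]]].
pose proof density_nonneg.
assert (Hr : voronoi_right t n N - t n <= h).
{ apply Rnot_lt_le. intros Hc.
  set (s := t n + (h + (voronoi_right t n N - t n)) / 2).
  assert (Hv : voronoi N t n s) by (apply (voronoi_iff n s Hn); unfold s; lra).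
  pose proof (voronoi_dist_le n s Hn Hv) as Hd.
  rewrite Rabs_pos_eq in Hd by (unfold s; lra). unfold s in Hd. lra. }
assert (Hl : t n - voronoi_left t n N <= h).
{ apply Rnot_lt_le. intros Hc.
  set (s := t n - (h + (t n - voronoi_left t n N)) / 2).
  assert (Hv : voronoi N t n s) by (apply (voronoi_iff n s Hn); unfold s; lra).
  pose proof (voronoi_dist_le n s Hn Hv) as Hd.
  rewrite Rabs_left1 in Hd by (unfold s; lra). unfold s in Hd. lra. }
lra.
Qed.

End VoronoiCells.

Lemma mindist_le_hdens N t : (0 < N)%nat -> (forall n, (n < N)%nat -> -1 <= t n <= 1) ->
  forall s, -1 < s < 1 -> mindist t (N - 1) s <= hdens N t.
Proof.
intros HN Ht s Hs. unfold hdens.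
set (E := fun d => exists s, -1 < s < 1 /\ d = mindist t (N - 1) s).
destruct (Lub_Rbar_correct E) as [Hub Hlub].
assert (Hs2 : Rbar_le (mindist t (N - 1) s) (Lub_Rbar E)) by (apply Hub; exists s; auto).
assert (H2 : Rbar_le (Lub_Rbar E) 2).
{ apply Hlub. intros d [s' [Hs' ->]]. simpl. eapply Rle_trans; [apply mindist_le_first|].
  destruct (Ht O HN). apply Rabs_le; lra. }
destruct (Lub_Rbar E); simpl in *; tauto.
Qed.

Lemma Cmod_le_Rabs_fst_snd z : Cmod z <= Rabs (fst z) + Rabs (snd z).
Proof.
unfold Cmod. rewrite <- (sqrt_square (Rabs (fst z) + Rabs (snd z)))
  by (pose proof (Rabs_pos (fst z)); pose proof (Rabs_pos (snd z)); lra).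
apply sqrt_le_1_alt. rewrite <- (pow2_abs (fst z)), <- (pow2_abs (snd z)).
pose proof (Rabs_pos (fst z)); pose proof (Rabs_pos (snd z)). nra.
Qed.

Lemma Rabs_fst_le_Cmod z : Rabs (fst z) <= Cmod z.
Proof. eapply Rle_trans; [apply Rmax_l|apply Rmax_Cmod]. Qed.

Lemma Rabs_snd_le_Cmod z : Rabs (snd z) <= Cmod z.
Proof. eapply Rle_trans; [apply Rmax_r|apply Rmax_Cmod]. Qed.

Section Quadrature.
Variable N : nat.
Variable t : nat -> R.
Hypothesis HN : (0 < N)%nat.
Hypothesis Ht : forall n, (n < N)%nat -> -1 <= t n <= 1.
Hypothesis Hinj : forall n m, (n < N)%nat -> (m < N)%nat -> t n = t m -> n = m.
Variable h : R.
Hypothesis Hh : forall s, -1 < s < 1 -> mindist t (N - 1) s <= h.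

Lemma voronoi_riemann_sum_error (w rho : R -> R) :
  (forall x, continuous w x) -> (forall x, continuous rho x) -> (forall x, 0 <= rho x) ->
  (forall x y s r, x <= s <= y -> x <= r <= y -> Rabs (w s - w r) <= RInt rho x y) ->
  Rabs (rsum N (fun n => tau N t n * w (t n)) - / 2 * RInt w (-1) 1) <= h * RInt rho (-1) 1.
Proof.
intros Hw Hr Hr0 Hosc.
assert (Hsum : rsum N (fun n => tau N t n * w (t n)) =
  / 2 * rsum N (fun n => (voronoi_right t n N - voronoi_left t n N) * w (t n))).
{ rewrite <- rsum_scal. apply rsum_ext. intros n Hn. rewrite tau_eq by auto. field. }
rewrite Hsum, <- Rmult_minus_distr_l, Rabs_mult, Rabs_pos_eq by lra.
replace (h * RInt rho (-1) 1) with (/ 2 * (2 * h * RInt rho (-1) 1)) by field.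
apply Rmult_le_compat_l; [lra|]. apply tiling_riemann_sum_error; auto.
- intros n Hn. destruct (voronoi_cell_bounds N t Ht n Hn) as [? [? [? ?]]].
  repeat split; try tauto. apply voronoi_cell_length_le with (N := N); auto.
- apply voronoi_cells_disjoint; auto.
- apply voronoi_cells_cover; auto.
Qed.

Lemma quadrature_Rabs_le (u du : R -> R) :
  (forall x, is_derive u x (du x)) -> (forall x, continuous du x) ->
  rsum N (fun n => tau N t n * Rabs (u (t n))) <=
  / 2 * RInt (fun s => Rabs (u s)) (-1) 1 + h * RInt (fun s => Rabs (du s)) (-1) 1.
Proof.
intros Hd Hc.
assert (Hu := derivable_continuous u du Hd).
pose proof (voronoi_riemann_sum_error (fun s => Rabs (u s)) (fun s => Rabs (du s))
  (continuous_Rabs_comp u Hu) (continuous_Rabs_comp du Hc) (fun x => Rabs_pos _)) as H.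
apply Rabs_le_between in H; [lra|].
intros. eapply Rle_trans; [apply Rabs_triang_inv2|].
apply (oscillation_le_RInt_Rabs_derive u du); auto.
Qed.

Lemma quadrature_mean_zero (u du : R -> R) :
  (forall x, is_derive u x (du x)) -> (forall x, continuous du x) -> is_RInt u (-1) 1 0 ->
  Rabs (rsum N (fun n => tau N t n * u (t n))) <= h * RInt (fun s => Rabs (du s)) (-1) 1.
Proof.
intros Hd Hc H0.
pose proof (voronoi_riemann_sum_error u (fun s => Rabs (du s)) (derivable_continuous u du Hd)
  (continuous_Rabs_comp du Hc) (fun x => Rabs_pos _) (oscillation_le_RInt_Rabs_derive u du Hd Hc))
  as H.
rewrite (is_RInt_unique _ _ _ _ H0) in H. rewrite Rmult_0_r, Rminus_0_r in H. exact H.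
Qed.

Lemma continuous_fst_trigpoly K c m x : continuous (fun s => fst (trigpoly K c m s)) x.
Proof. apply (derivable_continuous _ _ (is_derive_fst_trigpoly K c m)). Qed.

Lemma continuous_snd_trigpoly K c m x : continuous (fun s => snd (trigpoly K c m s)) x.
Proof. apply (derivable_continuous _ _ (is_derive_snd_trigpoly K c m)). Qed.

Lemma quadrature_Cmod_trigpoly K c m :
  (forall k l, (k < K)%nat -> (l < K)%nat -> m k = m l -> k = l) ->
  rsum N (fun n => tau N t n * Cmod (trigpoly K c m (t n))) <=
  2 * sqrt (energy K c) + 4 * h * sqrt (energy K (deriv_coef c m)).
Proof.
intros Hm.
assert (Hre := quadrature_Rabs_le _ _ (is_derive_fst_trigpoly K c m)
                 (continuous_fst_trigpoly K (deriv_coef c m) m)).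
assert (Him := quadrature_Rabs_le _ _ (is_derive_snd_trigpoly K c m)
                 (continuous_snd_trigpoly K (deriv_coef c m) m)).
assert (Hbound : forall u, (forall x, continuous u x) ->
          (forall s, Rabs (u s) <= Cmod (trigpoly K c m s)) ->
          RInt (fun s => Rabs (u s)) (-1) 1 <= 2 * sqrt (energy K c))
  by (intros; apply RInt_Rabs_le_energy with m; auto).
assert (Hbound' : forall u, (forall x, continuous u x) ->
          (forall s, Rabs (u s) <= Cmod (trigpoly K (deriv_coef c m) m s)) ->
          RInt (fun s => Rabs (u s)) (-1) 1 <= 2 * sqrt (energy K (deriv_coef c m)))
  by (intros; apply RInt_Rabs_le_energy with m; auto).
assert (H1 := Hbound _ (continuous_fst_trigpoly K c m) (fun s => Rabs_fst_le_Cmod _)).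
assert (H2 := Hbound _ (continuous_snd_trigpoly K c m) (fun s => Rabs_snd_le_Cmod _)).
assert (H3 := Hbound' _ (continuous_fst_trigpoly K _ m) (fun s => Rabs_fst_le_Cmod _)).
assert (H4 := Hbound' _ (continuous_snd_trigpoly K _ m) (fun s => Rabs_snd_le_Cmod _)).
pose proof (density_nonneg N t h Hh).
eapply Rle_trans.
- apply (rsum_le _ _ (fun n => tau N t n * Rabs (fst (trigpoly K c m (t n)))
                           + tau N t n * Rabs (snd (trigpoly K c m (t n))))).
  intros n Hn. rewrite <- Rmult_plus_distr_l.
  apply Rmult_le_compat_l; [apply tau_nonneg; auto|apply Cmod_le_Rabs_fst_snd].
- rewrite rsum_plus. nra.
Qed.

Lemma fst_RtoC_mult r (z : C) : fst (Cmult (RtoC r) z) = r * fst z.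
Proof. destruct z; unfold Cmult, RtoC; simpl; ring. Qed.

Lemma snd_RtoC_mult r (z : C) : snd (Cmult (RtoC r) z) = r * snd z.
Proof. destruct z; unfold Cmult, RtoC; simpl; ring. Qed.

Lemma quadrature_trigpoly_mean_zero K c m :
  (forall k l, (k < K)%nat -> (l < K)%nat -> m k = m l -> k = l) ->
  (forall k, (k < K)%nat -> m k <> 0%Z) ->
  Cmod (csum N (fun n => Cmult (RtoC (tau N t n)) (trigpoly K c m (t n)))) <=
  4 * h * sqrt (energy K (deriv_coef c m)).
Proof.
intros Hinjm Hm0.
assert (Hbound : forall u, (forall x, continuous u x) ->
          (forall s, Rabs (u s) <= Cmod (trigpoly K (deriv_coef c m) m s)) ->
          RInt (fun s => Rabs (u s)) (-1) 1 <= 2 * sqrt (energy K (deriv_coef c m)))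
  by (intros; apply RInt_Rabs_le_energy with m; auto).
assert (Hre := quadrature_mean_zero _ _ (is_derive_fst_trigpoly K c m)
                 (continuous_fst_trigpoly K (deriv_coef c m) m) (is_RInt_fst_trigpoly_0 K c m Hm0)).
assert (Him := quadrature_mean_zero _ _ (is_derive_snd_trigpoly K c m)
                 (continuous_snd_trigpoly K (deriv_coef c m) m) (is_RInt_snd_trigpoly_0 K c m Hm0)).
assert (H1 := Hbound _ (continuous_fst_trigpoly K _ m) (fun s => Rabs_fst_le_Cmod _)).
assert (H2 := Hbound _ (continuous_snd_trigpoly K _ m) (fun s => Rabs_snd_le_Cmod _)).
pose proof (density_nonneg N t h Hh).
eapply Rle_trans; [apply Cmod_le_Rabs_fst_snd|].
rewrite fst_csum, snd_csum.
rewrite (rsum_ext N _ (fun n => tau N t n * fst (trigpoly K c m (t n))))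
  by (intros; apply fst_RtoC_mult).
rewrite (rsum_ext N (fun n => snd _) (fun n => tau N t n * snd (trigpoly K c m (t n))))
  by (intros; apply snd_RtoC_mult).
nra.
Qed.

End Quadrature.

Definition window_freq (M k : nat) : Z := (Z.of_nat k - Z.of_nat M)%Z.

Lemma Cmod_phi j s : Cmod (phi j s) = 1.
Proof.
unfold Cmod, phi. simpl. rewrite !Rmult_1_r, Rplus_comm.
pose proof (sin2_cos2 (IZR j * PI * s)) as E. unfold Rsqr in E. rewrite E. apply sqrt_1.
Qed.

Lemma conj_phi_mult_phi i j s (z : C) :
  Cmult (Cconj (phi i s)) (Cmult (phi j s) z) = Cmult (phi (j - i) s) z.
Proof.
destruct z as [p q]. unfold Cmult, Cconj, phi; simpl. rewrite minus_IZR.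
replace ((IZR j - IZR i) * PI * s) with (IZR j * PI * s - IZR i * PI * s) by ring.
rewrite cos_minus, sin_minus. apply injective_projections; simpl; ring.
Qed.

Lemma conj_phi_mult_trigpoly i K c m s : Cmult (Cconj (phi i s)) (trigpoly K c m s) =
  trigpoly K c (fun k => (m k - i)%Z) s.
Proof. unfold trigpoly. rewrite csum_scal. apply csum_ext. intros. apply conj_phi_mult_phi. Qed.

Lemma Cmod_trigpoly_shift i K c m s :
  Cmod (trigpoly K c (fun k => (m k - i)%Z) s) = Cmod (trigpoly K c m s).
Proof. rewrite <- conj_phi_mult_trigpoly, Cmod_mult, Cmod_conj, Cmod_phi. ring. Qed.

Lemma U_on_window N t M x n : U_on N t M (PL M x) n =
  Cmult (RtoC (sqrt (tau N t n)))
        (trigpoly (2 * M) (fun k => x (window_freq M k)) (window_freq M) (t n)).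
Proof.
unfold U_on, trigpoly. rewrite csum_scal. apply csum_ext. intros k Hk. cbv zeta.
unfold PL. destruct excluded_middle_informative as [_|Hw].
- unfold Umat. fold (window_freq M k). ring.
- exfalso; apply Hw; unfold inwin; lia.
Qed.

Lemma Ustar_U_on_window N t M x i : (forall n, (n < N)%nat -> 0 <= tau N t n) ->
  Ustar N t (U_on N t M (PL M x)) i = csum N (fun n => Cmult (RtoC (tau N t n))
    (trigpoly (2 * M) (fun k => x (window_freq M k)) (fun k => (window_freq M k - i)%Z) (t n))).
Proof.
intros Htau. unfold Ustar. apply csum_ext. intros n Hn.
rewrite U_on_window, <- conj_phi_mult_trigpoly. unfold Umat.
set (F := trigpoly _ _ _ _). set (q := sqrt (tau N t n)).
replace (tau N t n) with (q * q) by (apply sqrt_sqrt; auto).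
destruct (phi i (t n)) as [a b], F as [f1 f2].
unfold Cmult, Cconj, RtoC; simpl. apply injective_projections; simpl; ring.
Qed.

Lemma energy_window_le (x : Z -> C) M : (forall j, Cmod (x j) <= 1) ->
  energy (2 * M) (fun k => x (window_freq M k)) <= 2 * INR M.
Proof.
intros Hx. replace (2 * INR M) with (INR (2 * M)) by (rewrite mult_INR; simpl; ring).
apply energy_le_card. auto.
Qed.

Lemma Rabs_IZR_mult_PI_le (z B : Z) : (Z.abs z <= B)%Z -> Rabs (IZR z * PI) <= IZR B * PI.
Proof.
intros H. pose proof PI_RGT_0.
rewrite Rabs_mult, (Rabs_pos_eq PI), <- abs_IZR by lra.
apply Rmult_le_compat_r; [lra|]. apply IZR_le; auto.
Qed.

Lemma sqrt_le_mult_sqrt B E X : 0 <= B -> 0 <= X -> E <= B ^ 2 * X -> sqrt E <= B * sqrt X.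
Proof.
intros HB HX HE. rewrite <- (sqrt_pow2 B HB), <- sqrt_mult_alt by apply pow2_ge_0.
apply sqrt_le_1_alt; auto.
Qed.

Section FourierBounds.
Variable N : nat.
Variable t : nat -> R.
Hypothesis HN : (0 < N)%nat.
Hypothesis Ht : forall n, (n < N)%nat -> -1 <= t n <= 1.
Hypothesis Hinj : forall n m, (n < N)%nat -> (m < N)%nat -> t n = t m -> n = m.
Variable h : R.
Hypothesis Hh : forall s, -1 < s < 1 -> mindist t (N - 1) s <= h.
Variable M : nat.
Variable x : Z -> C.
Hypothesis Hx : forall j, Cmod (x j) <= 1.

Let c := fun k => x (window_freq M k).

Lemma sqrt_energy_window_le : sqrt (energy (2 * M) c) <= sqrt 2 * sqrt (INR M).
Proof.
apply sqrt_le_mult_sqrt; [apply sqrt_pos|apply pos_INR|].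
rewrite <- Rsqr_pow2, Rsqr_sqrt by lra. apply energy_window_le; auto.
Qed.

Lemma sqrt_energy_deriv_window_le (m : nat -> Z) B : 0 <= B ->
  (forall k, (k < 2 * M)%nat -> Rabs (IZR (m k) * PI) <= B) ->
  sqrt (energy (2 * M) (deriv_coef c m)) <= B * sqrt 2 * sqrt (INR M).
Proof.
intros HB Hm. apply sqrt_le_mult_sqrt; [pose proof (sqrt_pos 2); nra|apply pos_INR|].
eapply Rle_trans; [apply energy_deriv_coef_le, Hm|].
rewrite Rpow_mult_distr, <- (Rsqr_pow2 (sqrt 2)), Rsqr_sqrt, Rmult_assoc by lra.
apply Rmult_le_compat_l; [apply pow2_ge_0|]. apply energy_window_le; auto.
Qed.

Lemma Ustar_window_bound i : h * INR M <= 1 ->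
  Cmod (Ustar N t (U_on N t M (PL M x)) i) <= 2 * sqrt 2 * (1 + 2 * PI) * sqrt (INR M).
Proof.
intros HhM. rewrite Ustar_U_on_window by (intros; apply tau_nonneg; auto).
eapply Rle_trans; [apply Cmod_csum|].
rewrite (rsum_ext N _ (fun n => tau N t n * Cmod (trigpoly (2 * M) c (window_freq M) (t n)))).
2: { intros n Hn. rewrite Cmod_mult, Cmod_R, Rabs_pos_eq, Cmod_trigpoly_shift
       by (apply tau_nonneg; auto). reflexivity. }
eapply Rle_trans; [apply quadrature_Cmod_trigpoly; auto; intros k l _ _; unfold window_freq; lia|].
pose proof (density_nonneg N t h Hh). pose proof PI_RGT_0.
assert (HE := sqrt_energy_window_le).
assert (HE' := sqrt_energy_deriv_window_le (window_freq M) (INR M * PI)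
                 ltac:(pose proof (pos_INR M); nra)
                 ltac:(intros k Hk; rewrite INR_IZR_INZ; apply Rabs_IZR_mult_PI_le;
                       unfold window_freq; lia)).
set (a := sqrt 2 * sqrt (INR M)) in *.
assert (Ha : 0 <= a) by (apply Rmult_le_pos; apply sqrt_pos).
assert (Hd : 4 * h * sqrt (energy (2 * M) (deriv_coef c (window_freq M))) <= 4 * PI * a).
{ eapply Rle_trans; [apply Rmult_le_compat_l; [lra|exact HE']|].
  replace (4 * h * (INR M * PI * sqrt 2 * sqrt (INR M))) with (4 * PI * a * (h * INR M))
    by (unfold a; ring).
  rewrite <- (Rmult_1_r (4 * PI * a)) at 2. apply Rmult_le_compat_l; [nra|auto]. }
replace (2 * sqrt 2 * (1 + 2 * PI) * sqrt (INR M)) with (2 * a + 4 * PI * a) by (unfold a; ring).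
lra.
Qed.

Lemma Ustar_offwindow_bound i Rr : (M <= Rr)%nat -> ~ inwin Rr i ->
  Cmod (Ustar N t (U_on N t M (PL M x)) i) <= 8 * sqrt 2 * PI * h * sqrt (INR M) * IZR (Z.abs i).
Proof.
intros HMR Hi. unfold inwin in Hi.
rewrite Ustar_U_on_window by (intros; apply tau_nonneg; auto).
eapply Rle_trans;
  [apply quadrature_trigpoly_mean_zero; auto; intros; unfold window_freq in *; lia|].
pose proof (density_nonneg N t h Hh). pose proof PI_RGT_0.
assert (HE' := sqrt_energy_deriv_window_le (fun k => (window_freq M k - i)%Z)
                 (IZR (2 * Z.abs i) * PI)
                 ltac:(apply Rmult_le_pos; [apply IZR_le; lia|lra])
                 ltac:(intros k Hk; apply Rabs_IZR_mult_PI_le; unfold window_freq; lia)).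
rewrite mult_IZR in HE'.
replace (8 * sqrt 2 * PI * h * sqrt (INR M) * IZR (Z.abs i))
  with (4 * h * (2 * IZR (Z.abs i) * PI * sqrt 2 * sqrt (INR M))) by ring.
apply Rmult_le_compat_l; [lra|exact HE'].
Qed.

End FourierBounds.

Lemma Aop_inwin N t w M Rr x i : inwin Rr i -> Aop N t w M Rr x i = RtoC 0.
Proof.
intros Hi. unfold Aop, PLperp, PL.
destruct excluded_middle_informative; [ring|contradiction].
Qed.

Lemma Cmod_Aop_outwin N t w M Rr x i : 0 < w i -> ~ inwin Rr i ->
  Cmod (Aop N t w M Rr x i) = / w i * Cmod (Ustar N t (U_on N t M (PL M x)) i).
Proof.
intros Hw Hi. unfold Aop, PLperp. set (V := Ustar N t (U_on N t M (PL M x))).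
unfold PL at 1. destruct excluded_middle_informative; [contradiction|].
replace (Cminus (Winv w V i) (RtoC 0)) with (Winv w V i) by ring.
unfold Winv. rewrite Cmod_mult, Cmod_R, Rabs_pos_eq; auto.
apply Rlt_le, Rinv_0_lt_compat; auto.
Qed.

Lemma sup_out_bounded Rr g B : (forall i, ~ inwin Rr i -> g i <= B) ->
  exists s, sup_out Rr g = Finite s /\ forall i, ~ inwin Rr i -> g i <= s.
Proof.
intros HB. unfold sup_out.
set (E := fun r => exists i, ~ inwin Rr i /\ r = g i).
destruct (Lub_Rbar_correct E) as [Hub Hlub].
assert (Hout : ~ inwin Rr (Z.of_nat Rr)) by (unfold inwin; lia).
assert (Hge : Rbar_le (g (Z.of_nat Rr)) (Lub_Rbar E)) by (apply Hub; eexists; eauto).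
assert (Hle : Rbar_le (Lub_Rbar E) B) by (apply Hlub; intros r [i [Hi ->]]; apply HB; auto).
destruct (Lub_Rbar E) as [s| |]; simpl in Hge, Hle; try contradiction.
exists s. split; auto. intros i Hi. apply (Hub (g i)). exists i; auto.
Qed.

Lemma F_linf_le_sup_out N t w M Rr K g :
  (forall i, 1 <= w i) -> 0 <= K -> (forall i, 0 <= g i) ->
  (exists B, forall i, ~ inwin Rr i -> g i <= B) ->
  (forall x, (forall j, Cmod (x j) <= 1) -> forall i, ~ inwin Rr i ->
     Cmod (Ustar N t (U_on N t M (PL M x)) i) <= K * (g i * w i)) ->
  Rbar_le (F_linf N t w M Rr) (Rbar_mult K (sup_out Rr g)).
Proof.
intros Hw HK Hg [B HB] HU.
destruct (sup_out_bounded Rr g B HB) as [s [-> Hs]]. simpl.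
assert (Hs0 : 0 <= s)
  by (eapply Rle_trans; [apply (Hg (Z.of_nat Rr))|apply Hs; unfold inwin; lia]).
apply Lub_Rbar_correct. intros r [x [Hx [i ->]]]. simpl.
destruct (excluded_middle_informative (inwin Rr i)) as [Hi|Hi].
- rewrite Aop_inwin, Cmod_0 by auto. apply Rmult_le_pos; auto.
- assert (Hwi : 0 < w i) by (specialize (Hw i); lra).
  rewrite Cmod_Aop_outwin by auto.
  apply Rle_trans with (/ w i * (K * (g i * w i))).
  + apply Rmult_le_compat_l; [apply Rlt_le, Rinv_0_lt_compat|apply HU]; auto.
  + replace (/ w i * (K * (g i * w i))) with (K * g i) by (field; lra).
    apply Rmult_le_compat_l; auto.
Qed.

Theorem lemma8p4 :
  (exists C : R, forall (N : nat) (t : nat -> R) (w : Z -> R) (M Rr : nat),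
     (0 < N)%nat ->
     (forall n, (n < N)%nat -> -1 <= t n <= 1) ->
     (forall n m, (n < N)%nat -> (m < N)%nat -> t n = t m -> n = m) ->
     (forall i, 1 <= w i) ->
     hdens N t * INR M <= 1 ->
     Rbar_le (F_linf N t w M Rr)
             (Rbar_mult (C * sqrt (INR M)) (sup_out Rr (fun i => / w i))))
  /\
  (forall c : R, 0 < c ->
   exists C : R, forall (N : nat) (t : nat -> R) (w : Z -> R) (M Rr : nat),
     (0 < N)%nat ->
     (forall n, (n < N)%nat -> -1 <= t n <= 1) ->
     (forall n m, (n < N)%nat -> (m < N)%nat -> t n = t m -> n = m) ->
     (forall i, 1 <= w i) ->
     (forall i, c * IZR (Z.abs i) <= w i) ->
     (M <= Rr)%nat ->
     hdens N t * INR M <= 1 ->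
     Rbar_le (F_linf N t w M Rr)
             (Rbar_mult (C * hdens N t * sqrt (INR M))
                        (sup_out Rr (fun i => IZR (Z.abs i) / w i)))).
Proof.
pose proof PI_RGT_0. pose proof (sqrt_pos 2).
split.
- exists (2 * sqrt 2 * (1 + 2 * PI)). intros N t w M Rr HN Ht Hinj Hw HhM.
  assert (Hwi : forall i, 0 < w i) by (intros i; specialize (Hw i); lra).
  apply F_linf_le_sup_out; auto.
  + pose proof (sqrt_pos (INR M)). apply Rmult_le_pos; nra.
  + intros i. apply Rlt_le, Rinv_0_lt_compat; auto.
  + exists 1. intros i _. rewrite <- Rinv_1. apply Rinv_le_contravar; auto; lra.
  + intros x Hx i _. rewrite Rinv_l, Rmult_1_r by (specialize (Hwi i); lra).
    apply Ustar_window_bound with (h := hdens N t); auto using mindist_le_hdens.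
- intros c Hc. exists (8 * sqrt 2 * PI). intros N t w M Rr HN Ht Hinj Hw Hwc HMR HhM.
  assert (Hwi : forall i, 0 < w i) by (intros i; specialize (Hw i); lra).
  assert (Habs : forall i, 0 <= IZR (Z.abs i)) by (intros; apply IZR_le; lia).
  pose proof (density_nonneg N t _ (mindist_le_hdens N t HN Ht)).
  apply F_linf_le_sup_out; auto.
  + apply Rmult_le_pos; [apply Rmult_le_pos|apply sqrt_pos]; [nra|auto].
  + intros i. apply Rmult_le_pos; [auto|apply Rlt_le, Rinv_0_lt_compat; auto].
  + exists (/ c). intros i _. specialize (Hwc i). specialize (Hwi i).
    apply (Rmult_le_reg_l c); auto. unfold Rdiv.
    rewrite Rinv_r, <- Rmult_assoc by lra. apply Rle_div_l; [|rewrite Rmult_1_l]; auto.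
  + intros x Hx i Hi. replace (IZR (Z.abs i) / w i * w i) with (IZR (Z.abs i))
      by (field; specialize (Hwi i); lra).
    apply Ustar_offwindow_bound with (Rr := Rr); auto using mindist_le_hdens.
Qed.
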